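(* In any weighted graph on $n$ vertices with $\mathsf{OPT}^{\mathsf{IR}}<\mathsf{OPT}^{\mathsf{stable}}$, there exists a persuasive signaling scheme with at most $n+1$ signals (i.e., $|\Sigma|\le n+1$) whose cost is strictly lower than $\mathsf{OPT}^{\mathsf{stable}}$.
   Context: Setting. $V$ is a finite set of $n$ task types and $W=(W_{u,v})_{u,v\in V}$ is a symmetric matrix with entries in $[0,1]$ and $W_{v,v}=1$ for all $v$ (the weighted graph has edges $\{u,v\}$, $u\ne v$, with $W_{u,v}>0$ and weight $W_{u,v}$). A vector $\theta\in\mathbb{R}_{\ge0}^V$ is feasible if $W\theta\ge\mathbf 1$ coordinatewise, and stable if it is feasible and for every $v$, $\theta_v=\min\{x\ge0: x+\sum_{v'\neq v}W_{v,v'}\theta_{v'}\ge1\}$. $\mathsf{OPT}^{\mathsf{IR}}=\min\{\|\theta\|_1:\theta\in[0,1]^V\text{ feasible}\}$ and $\mathsf{OPT}^{\mathsf{stable}}=\min\{\|\theta\|_1:\theta\text{ stable}\}$. Signaling. There are $n$ agents; the type profile $t=(t_1,\dots,t_n)$ is a uniformly random bijection $[n]\to V$. A signaling scheme with finite signal space $\Sigma\subset[0,1]$ is a map $\varphi$ assigning to each bijection $t$ a distribution $\varphi(t)$ on $\Sigma^V$; given $t$, $s\sim\varphi(t)$ is drawn and agent $i$ privately receives $s_{t_i}$. For agent $i$, a signal $\theta\in\Sigma$ with $\Pr[s_{t_i}=\theta]>0$ and $x\ge0$, let $Q_i(x\mid\theta)=\mathbb{E}\big[x+\sum_{v'\neq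 t_i}W_{t_i,v'}s_{v'}\,\big|\,s_{t_i}=\theta\big]$. The scheme is persuasive if for every agent $i$ and every such $\theta$: $Q_i(\theta\mid\theta)\ge1$ and $\theta=\min\{x\ge0:Q_i(x\mid\theta)\ge1\}$. Its cost is $\mathbb{E}[\|s\|_1]$. *)

From HB Require Import structures.
From mathcomp Require Import all_boot all_order all_algebra.
From mathcomp Require Export reals.
Set Implicit Arguments. Unset Strict Implicit. Unset Printing Implicit Defensive.
Import Order.TTheory GRing.Theory Num.Theory.
Local Open Scope ring_scope.

Section Defs.
Variables (R : realType) (V : finType).

Definition weight_matrix (W : V -> V -> R) : Prop :=
  (forall u v, W u v = W v u) /\ (forall u v, 0 <= W u v <= 1) /\
  (forall v, W v v = 1).

Definition least (P : R -> Prop) (x : R) : Prop :=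
  P x /\ forall y, P y -> x <= y.

Definition feasible (W : V -> V -> R) (th : V -> R) : Prop :=
  (forall v, 0 <= th v) /\ (forall v, 1 <= \sum_u W v u * th u).

Definition IR_feasible (W : V -> V -> R) (th : V -> R) : Prop :=
  feasible W th /\ (forall v, th v <= 1).

Definition stable (W : V -> V -> R) (th : V -> R) : Prop :=
  feasible W th /\
  forall v, least (fun x => 0 <= x /\ 1 <= x + \sum_(u | u != v) W v u * th u)
                  (th v).

Definition l1norm (th : V -> R) : R := \sum_v `|th v|.

Definition is_OPT_IR (W : V -> V -> R) (o : R) : Prop :=
  (exists th, IR_feasible W th /\ l1norm th = o) /\
  (forall th, IR_feasible W th -> o <= l1norm th).

Definition is_OPT_stable (W : V -> V -> R) (o : R) : Prop :=
  (exists th, stable W th /\ l1norm th = o) /\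
  (forall th, stable W th -> o <= l1norm th).

(* Agents are 'I_n with n = #|V|; a type profile is a bijection
   t : 'I_n -> V, i.e. an injective finite function.  The signal space is
   Sigma = {sig j | j < k} with sig injective (so |Sigma| = k), values in [0,1].
   A signal vector s in Sigma^V is encoded by its index vector {ffun V -> 'I_k}.
   phi t is a probability distribution on signal vectors for each bijection t. *)
Definition profile := {ffun 'I_#|V| -> V}.
Definition bijections : {set profile} := [set t : profile | injectiveb t].

Definition is_scheme (k : nat) (sig : 'I_k -> R)
    (phi : profile -> {ffun V -> 'I_k} -> R) : Prop :=
  injective sig /\ (forall j, 0 <= sig j <= 1) /\
  forall t, t \in bijections ->
    (forall s, 0 <= phi t s) /\ \sum_s phi t s = 1.

Definition jointP (k : nat) (phi : profile -> {ffun V -> 'I_k} -> R)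
    (t : profile) (s : {ffun V -> 'I_k}) : R :=
  if t \in bijections then phi t s / #|bijections|%:R else 0.

Definition PrSig (k : nat) (sig : 'I_k -> R)
    (phi : profile -> {ffun V -> 'I_k} -> R) (i : 'I_#|V|) (theta : R) : R :=
  \sum_(t : profile) \sum_(s : {ffun V -> 'I_k}) (sig (s (t i)) == theta)%:R * jointP phi t s.

Definition Qi (W : V -> V -> R) (k : nat) (sig : 'I_k -> R)
    (phi : profile -> {ffun V -> 'I_k} -> R) (i : 'I_#|V|) (x theta : R) : R :=
  (\sum_(t : profile) \sum_(s : {ffun V -> 'I_k}) (sig (s (t i)) == theta)%:R * jointP phi t s *
      (x + \sum_(v | v != t i) W (t i) v * sig (s v)))
  / PrSig sig phi i theta.

Definition persuasive (W : V -> V -> R) (k : nat) (sig : 'I_k -> R)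
    (phi : profile -> {ffun V -> 'I_k} -> R) : Prop :=
  forall (i : 'I_#|V|) (j : 'I_k), 0 < PrSig sig phi i (sig j) ->
    1 <= Qi W sig phi i (sig j) (sig j) /\
    least (fun x => 0 <= x /\ 1 <= Qi W sig phi i x (sig j)) (sig j).

Definition cost (k : nat) (sig : 'I_k -> R)
    (phi : profile -> {ffun V -> 'I_k} -> R) : R :=
  \sum_(t : profile) \sum_(s : {ffun V -> 'I_k}) jointP phi t s * l1norm (fun v => sig (s v)).

End Defs.

From HB Require Import structures.
From mathcomp Require Import all_boot all_order all_algebra.
From mathcomp Require Import reals.
From mathcomp Require Import fingroup perm.
From mathcomp Require Import ring lra.
Set Implicit Arguments. Unset Strict Implicit. Unset Printing Implicit Defensive.
Import Order.TTheory GRing.Theory Num.Theory.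
Local Open Scope ring_scope.

(* Let y be a stable profile of minimum cost.  Positive coordinates of a
   stable profile are tight; if the zero coordinates were tight as well, then
   W y = 1 and, W being symmetric, every feasible th would satisfy
   |th|_1 = y^T W th >= |y|_1, contradicting OPT^IR < OPT^stable.  So some
   type v0 has y v0 = 0 although the others cover it by 1 + d with d > 0.
   The scheme recommends y with probability 1 - p and the all-zero vector with
   probability p, using the signals {0} U {y v}.  A positive signal reveals
   the first branch, on which y is a best response; under the zero signal the
   surplus d of v0 compensates the all-zero branch when p is small, and the
   cost (1 - p) OPT^stable is below OPT^stable. *)

Section Coverage.
Variables (R : realType) (V : finType) (W : V -> V -> R).
Hypothesis hW : weight_matrix W.

Definition offset (th : V -> R) (v : V) : R := \sum_(u | u != v) W v u * th u.

Lemma coverage_split th v : \sum_u W v u * th u = th v + offset th v.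
Proof. by rewrite (bigD1 v) //=; case: hW => _ [_ ->]; rewrite mul1r. Qed.

Lemma offset_ge0 th v : (forall u, 0 <= th u) -> 0 <= offset th v.
Proof.
move=> th_ge0; apply: sumr_ge0 => u _; apply: mulr_ge0 => //.
by case: hW => _ [/(_ v u) /andP[]].
Qed.

Lemma l1norm_le_feasible y th :
  (forall v, 0 <= y v) -> (forall v, \sum_u W v u * y u = 1) ->
  feasible W th -> l1norm y <= l1norm th.
Proof.
move=> y_ge0 Wy1 [th_ge0 Wth_ge1].
have -> : l1norm th = \sum_u y u * \sum_v W u v * th v.
  rewrite /l1norm (eq_bigr (fun v => \sum_u W v u * y u * th v)); last first.
    by move=> v _; rewrite -mulr_suml Wy1 mul1r ger0_norm.
  rewrite exchange_big /=; apply: eq_bigr => u _; rewrite mulr_sumr.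
  by apply: eq_bigr => v _; case: hW => W_sym _; rewrite W_sym mulrCA mulrA.
apply: ler_sum => u _; rewrite ger0_norm // -{1}[y u]mulr1.
exact: ler_wpM2l.
Qed.

Section Stable.
Variable y : V -> R.
Hypothesis hy : stable W y.

Lemma stable_ge0 v : 0 <= y v.
Proof. by case: hy => [[]]. Qed.

Lemma stable_coverage v : 1 <= y v + offset y v.
Proof. by rewrite -coverage_split; case: hy => [[_]]. Qed.

Lemma stable_least v x : 0 <= x -> 1 <= x + offset y v -> y v <= x.
Proof. by case: hy => _ /(_ v) [_ y_least] *; apply: y_least. Qed.

Lemma stable_le1 v : y v <= 1.
Proof. by apply: stable_least; rewrite // lerDl offset_ge0 //; apply: stable_ge0. Qed.

Lemma stable_tight v : y v != 0 -> y v + offset y v = 1.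
Proof.
move=> yv_neq0; have yv_ge0 := stable_ge0 v; have := stable_coverage v.
have [offset_ge1|offset_lt1] := lerP 1 (offset y v).
  have : y v <= 0 by apply: stable_least; rewrite ?add0r.
  by rewrite le_eqVlt (negbTE yv_neq0) ltNge yv_ge0.
have : y v <= 1 - offset y v by apply: stable_least; lra.
lra.
Qed.

Lemma stable_overcovered_zero th :
  feasible W th -> l1norm th < l1norm y ->
  exists2 v, y v = 0 & 1 < offset y v.
Proof.
move=> th_feas lt_th_y.
have [/existsP[v /andP[/eqP yv0 ov_gt1]]|] :=
  boolP [exists v, (y v == 0) && (1 < offset y v)]; first by exists v.
rewrite negb_exists => /forallP not_over; exfalso.
suff : l1norm y <= l1norm th by rewrite leNgt lt_th_y.
apply: l1norm_le_feasible => // [v|v]; first exact: stable_ge0.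
rewrite coverage_split; have [yv0|] := eqVneq (y v) 0; last exact: stable_tight.
apply/eqP; rewrite eq_le stable_coverage andbT yv0 add0r leNgt.
by have := not_over v; rewrite yv0 eqxx.
Qed.

End Stable.
End Coverage.

Section Signals.
Variables (R : realType) (V : finType) (y : V -> R).

Definition signal_values : seq R := undup (0 :: [seq y v | v <- enum V]).
Definition signal (j : 'I_(size signal_values)) : R := nth 0 signal_values j.

Lemma size_signal_values : (size signal_values <= #|V|.+1)%N.
Proof. by rewrite (leq_trans (size_undup _)) //= size_map -cardE. Qed.

Lemma signal_inj : injective signal.
Proof.
move=> i j /eqP; rewrite nth_uniq ?undup_uniq // => /eqP; exact: val_inj.
Qed.

Lemma signalP j : signal j = 0 \/ exists v, signal j = y v.
Proof.
rewrite /signal; have := mem_nth 0 (ltn_ord j); rewrite mem_undup in_cons.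
by case/orP=> [/eqP|/mapP[v _]] ->; [left | right; exists v].
Qed.

Lemma zero_in_signal_values : 0 \in signal_values.
Proof. by rewrite mem_undup mem_head. Qed.

Lemma y_in_signal_values v : y v \in signal_values.
Proof. by rewrite mem_undup in_cons map_f ?mem_enum ?orbT. Qed.

Definition encode (th : V -> R) (th_in : forall v, th v \in signal_values) :
    {ffun V -> 'I_(size signal_values)} :=
  [ffun v => Ordinal (etrans (index_mem _ _) (th_in v))].

Lemma encodeK th th_in v : signal (@encode th th_in v) = th v.
Proof. by rewrite /signal ffunE nth_index. Qed.

Definition encode_y := encode y_in_signal_values.
Definition encode_zero := @encode (fun=> 0) (fun=> zero_in_signal_values).

Lemma encode_yK v : signal (encode_y v) = y v.
Proof. exact: encodeK. Qed.

Lemma encode_zeroK v : signal (encode_zero v) = 0.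
Proof. exact: encodeK. Qed.

End Signals.

Arguments signal {R V} y j.

Section Schemes.
Variables (R : realType) (V : finType).

Lemma bijections_card_gt0 : (0 < #|bijections V|)%N.
Proof.
apply/card_gt0P; exists [ffun j => enum_val j].
by rewrite inE; apply/injectiveP => j1 j2; rewrite !ffunE => /enum_val_inj.
Qed.

Lemma bijection_with (i : 'I_#|V|) (v : V) :
  exists2 t : profile V, t \in bijections V & t i = v.
Proof.
exists [ffun j => tperm (enum_val i) v (enum_val j)]; last by rewrite ffunE tpermL.
by rewrite inE; apply/injectiveP => j1 j2; rewrite !ffunE => /perm_inj/enum_val_inj.
Qed.

Definition prior (t : profile V) : R :=
  if t \in bijections V then #|bijections V|%:R^-1 else 0.

Lemma prior_ge0 t : 0 <= prior t.
Proof. by rewrite /prior; case: ifP; rewrite ?invr_ge0. Qed.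

Lemma sum_prior : \sum_t prior t = 1.
Proof.
rewrite -big_mkcond /= sumr_const -[_ *+ _]mulr_natr mulVf //.
by rewrite pnatr_eq0 -lt0n bijections_card_gt0.
Qed.

Lemma sum_indicator_mul (T : finType) (c : T) (G : T -> R) :
  \sum_s (s == c)%:R * G s = G c.
Proof.
by rewrite (bigD1 c) //= eqxx mul1r big1 ?addr0 // => s /negbTE ->; rewrite mul0r.
Qed.

Variable k : nat.

Definition mix2 (p : R) (a b : {ffun V -> 'I_k}) (t : profile V)
    (s : {ffun V -> 'I_k}) : R :=
  (1 - p) * (s == a)%:R + p * (s == b)%:R.

Lemma mix2_ge0 p a b t s : 0 <= p <= 1 -> 0 <= mix2 p a b t s.
Proof. by case/andP=> p_ge0 p_le1; rewrite addr_ge0 ?mulr_ge0 ?subr_ge0. Qed.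

Lemma sum_mix2 p a b t : \sum_s mix2 p a b t s = 1.
Proof.
have sum_eq c : \sum_s (s == c)%:R = 1 :> R.
  by rewrite -[RHS](sum_indicator_mul c (fun=> 1)); apply: eq_bigr => s _; rewrite mulr1.
by rewrite big_split /= -!mulr_sumr !sum_eq; ring.
Qed.

Lemma sum_jointP_mix2 (G : {ffun V -> 'I_k} -> R) p a b t :
  \sum_s G s * jointP (mix2 p a b) t s = prior t * ((1 - p) * G a + p * G b).
Proof.
rewrite /jointP /prior; case: ifP => _.
  2: by rewrite mul0r big1 // => s _; rewrite mulr0.
transitivity (\sum_s ((1 - p) / #|bijections V|%:R * ((s == a)%:R * G s) +
                      p / #|bijections V|%:R * ((s == b)%:R * G s))).
  by apply: eq_bigr => s _; rewrite /mix2; ring.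
by rewrite big_split /= -!mulr_sumr !sum_indicator_mul; ring.
Qed.

Variables (W : V -> V -> R) (sig : 'I_k -> R) (phi : profile V -> {ffun V -> 'I_k} -> R).

Definition offset_mass (i : 'I_#|V|) (th : R) : R :=
  \sum_(t : profile V) \sum_(s : {ffun V -> 'I_k})
    (sig (s (t i)) == th)%:R * jointP phi t s * offset W (fun v => sig (s v)) (t i).

Lemma QiE i x th : PrSig sig phi i th != 0 ->
  Qi W sig phi i x th = x + offset_mass i th / PrSig sig phi i th.
Proof.
move=> Pr_neq0; rewrite /Qi.
under eq_bigr do under eq_bigr do rewrite mulrDr.
under eq_bigr do rewrite big_split /=.
rewrite big_split /= mulrDl; congr (_ + _).
rewrite /PrSig; under eq_bigr do rewrite -mulr_suml.
by rewrite -mulr_suml mulrC mulKf.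
Qed.

Lemma best_response_shift (c th : R) : 0 <= th ->
  (th = 0 /\ 1 <= c) \/ th + c = 1 ->
  1 <= th + c /\ least (fun x => 0 <= x /\ 1 <= x + c) th.
Proof.
move=> th_ge0 th_c.
have c_ge : 1 <= th + c by case: th_c => [[-> ?]|->]; rewrite ?add0r.
split=> //; split=> [|x [x_ge0 x_c]]; first by split.
by case: th_c => [[-> _]|th_c] //; lra.
Qed.

Lemma offset_mass_persuasive : (forall j, 0 <= sig j) ->
  (forall i j, 0 < PrSig sig phi i (sig j) ->
     sig j = 0 /\ PrSig sig phi i (sig j) <= offset_mass i (sig j) \/
     offset_mass i (sig j) = (1 - sig j) * PrSig sig phi i (sig j)) ->
  persuasive W sig phi.
Proof.
move=> sig_ge0 offset_massP i j Pr_gt0; have Pr_neq0 := lt0r_neq0 Pr_gt0.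
set c := offset_mass i (sig j) / PrSig sig phi i (sig j).
have : (sig j = 0 /\ 1 <= c) \/ sig j + c = 1.
  rewrite /c; case: (offset_massP i j Pr_gt0) => [[sig0 le_Pr]|->].
    by left; split=> //; rewrite ler_pdivlMr // mul1r.
  by right; rewrite mulfK //; ring.
move=> /(best_response_shift (sig_ge0 j)) [c_ge1 [[th_ge0 th_c] th_least]].
have eQ x : Qi W sig phi i x (sig j) = x + c by exact: QiE.
split; first by rewrite eQ.
split; first by rewrite /= eQ.
by move=> x [x_ge0]; rewrite eQ => x_c; apply: th_least.
Qed.

End Schemes.

Arguments prior {R V} t.

Section DilutedScheme.
Variables (R : realType) (V : finType) (W : V -> V -> R) (y : V -> R) (p : R).

Definition diluted : profile V -> {ffun V -> 'I_(size (signal_values y))} -> R :=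
  mix2 p (encode_y y) (encode_zero y).

Lemma PrSig_diluted i th : PrSig (signal y) diluted i th =
  \sum_t prior t * ((1 - p) * (y (t i) == th)%:R + p * (0 == th)%:R).
Proof.
apply: eq_bigr => t _.
rewrite (sum_jointP_mix2 (fun s => (signal y (s (t i)) == th)%:R)).
by rewrite encode_yK encode_zeroK.
Qed.

Lemma offset_mass_diluted i th : offset_mass W (signal y) diluted i th =
  \sum_t prior t * ((1 - p) * ((y (t i) == th)%:R * offset W y (t i))).
Proof.
apply: eq_bigr => t _; under eq_bigr do rewrite mulrAC.
rewrite (sum_jointP_mix2 (fun s => (signal y (s (t i)) == th)%:R *
                                   offset W (fun v => signal y (s v)) (t i))).
have offset_y : offset W (fun v => signal y (encode_y y v)) (t i) = offset W y (t i).
  by apply: eq_bigr => v _; rewrite encode_yK.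
have offset_zero : offset W (fun v => signal y (encode_zero y v)) (t i) = 0.
  by apply: big1 => v _; rewrite encode_zeroK mulr0.
by rewrite offset_y offset_zero encode_yK mulr0 mulr0 addr0.
Qed.

Lemma cost_diluted : cost (signal y) diluted = (1 - p) * l1norm y.
Proof.
rewrite /cost; under eq_bigr do under eq_bigr do rewrite mulrC.
rewrite (eq_bigr _ (fun t _ =>
  sum_jointP_mix2 (fun s => l1norm (fun v => signal y (s v))) _ _ _ t)).
have l1norm_y : l1norm (fun v => signal y (encode_y y v)) = l1norm y.
  by apply: eq_bigr => v _; rewrite encode_yK.
have l1norm_zero : l1norm (fun v => signal y (encode_zero y v)) = 0.
  by apply: big1 => v _; rewrite encode_zeroK normr0.
by rewrite -mulr_suml sum_prior mul1r l1norm_y l1norm_zero mulr0 addr0.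
Qed.

Hypotheses (hW : weight_matrix W) (hy : stable W y) (p01 : 0 <= p <= 1).

Lemma signal_bounds j : 0 <= signal y j <= 1.
Proof.
have [->|[v ->]] := signalP j; first by rewrite lexx ler01.
by rewrite (stable_ge0 hy) (stable_le1 hW hy).
Qed.

Lemma is_scheme_diluted : is_scheme (signal y) diluted.
Proof.
split; first exact: signal_inj.
split; first exact: signal_bounds.
by move=> t _; split=> [s|]; [exact: mix2_ge0 | exact: sum_mix2].
Qed.

Lemma offset_mass_diluted_pos i th : th != 0 ->
  offset_mass W (signal y) diluted i th = (1 - th) * PrSig (signal y) diluted i th.
Proof.
move=> th_neq0; rewrite offset_mass_diluted PrSig_diluted mulr_sumr.
apply: eq_bigr => t _; have -> : (0 == th) = false by rewrite eq_sym; exact: negbTE.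
have [yt|_] := eqVneq (y (t i)) th; last by rewrite /=; ring.
have tight : th + offset W y (t i) = 1.
  by rewrite -yt; apply: (stable_tight hW hy); rewrite yt.
have -> : offset W y (t i) = 1 - th by lra.
by rewrite /=; ring.
Qed.

(* One profile giving agent [i] the type [v0] already makes up for the all-zero branch. *)
Lemma zero_signal_covered v0 i : y v0 = 0 ->
  #|bijections V|%:R * p <= (1 - p) * (offset W y v0 - 1) ->
  PrSig (signal y) diluted i 0 <= offset_mass W (signal y) diluted i 0.
Proof.
move=> y_v0 p_small; rewrite offset_mass_diluted PrSig_diluted eqxx -subr_ge0 -sumrB.
pose surplus t := prior t * ((1 - p) * ((y (t i) == 0)%:R * (offset W y (t i) - 1))).
rewrite (eq_bigr (fun t => surplus t - p * prior t)) => [|t _].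
  2: by rewrite /surplus /=; ring.
rewrite sumrB -mulr_sumr sum_prior mulr1 subr_ge0.
have [t0 t0_bij t0_i] := bijection_with i v0.
have surplus_ge0 t : 0 <= surplus t.
  apply: mulr_ge0; first exact: prior_ge0.
  apply: mulr_ge0; first by case/andP: p01 => _; rewrite subr_ge0.
  have [yt|] := eqVneq (y (t i)) 0; last by rewrite mulrb mul0r.
  by rewrite mulrb mul1r subr_ge0 -[offset _ _ _]add0r -yt (stable_coverage hW hy).
rewrite (bigD1 t0) //= -[p]addr0 lerD ?sumr_ge0 //.
have N_neq0 : #|bijections V|%:R != 0 :> R by rewrite pnatr_eq0 -lt0n bijections_card_gt0.
rewrite /surplus /prior t0_bij t0_i y_v0 eqxx mulrb mul1r.
rewrite -[X in X <= _](mulKf N_neq0).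
by apply: ler_wpM2l; rewrite // invr_ge0 ler0n.
Qed.

Lemma persuasive_diluted v0 : y v0 = 0 ->
  #|bijections V|%:R * p <= (1 - p) * (offset W y v0 - 1) ->
  persuasive W (signal y) diluted.
Proof.
move=> y_v0 p_small; apply: offset_mass_persuasive => [j|i j _].
  by case/andP: (signal_bounds j).
have [sig0|sig_neq0] := eqVneq (signal y j) 0.
  by left; split=> //; rewrite sig0; exact: (zero_signal_covered _ y_v0).
by right; exact: offset_mass_diluted_pos.
Qed.

End DilutedScheme.

Arguments diluted {R V} y p _ _.

Lemma dilution_weight (R : realFieldType) (N d : R) : 0 < N -> 0 < d ->
  [/\ 0 < d / (N + d), d / (N + d) < 1 & N * (d / (N + d)) = (1 - d / (N + d)) * d].
Proof.
move=> N_gt0 d_gt0; have Nd_gt0 : 0 < N + d by rewrite addr_gt0.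
split; first by rewrite divr_gt0.
  by rewrite ltr_pdivrMr // mul1r ltrDr.
by field; rewrite lt0r_neq0.
Qed.

Theorem theorem1p4 (R : realType) (V : finType) (W : V -> V -> R)
    (optIR optST : R) :
  weight_matrix W ->
  is_OPT_IR W optIR -> is_OPT_stable W optST ->
  optIR < optST ->
  exists (k : nat) (sig : 'I_k -> R) (phi : profile V -> {ffun V -> 'I_k} -> R),
    (k <= #|V|.+1)%N /\ is_scheme sig phi /\ persuasive W sig phi /\
    cost sig phi < optST.
Proof.
move=> hW [[th [[th_feas _] <-]] _] [[y [hy <-]] _] lt_IR_stable.
have [v0 y_v0 over_v0] := stable_overcovered_zero hW hy th_feas lt_IR_stable.
set N : R := #|bijections V|%:R; set d := offset W y v0 - 1.
have N_gt0 : 0 < N by rewrite ltr0n bijections_card_gt0.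
have d_gt0 : 0 < d by rewrite subr_gt0.
have [p_gt0 p_lt1 Np] := dilution_weight N_gt0 d_gt0.
have p01 : 0 <= d / (N + d) <= 1 by rewrite !ltW.
exists (size (signal_values y)), (signal y), (diluted y (d / (N + d))).
split; first exact: size_signal_values.
split; first exact: is_scheme_diluted hW hy p01.
split; first by apply: (persuasive_diluted hW hy p01 y_v0); rewrite Np.
have : 0 <= l1norm th by apply: sumr_ge0 => v _; apply: normr_ge0.
rewrite cost_diluted; nra.
Qed.
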